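(* Every tree $T$ of order $n\ge 1$ admits a family of $\lceil 3(n-1)/8\rceil$ induced subgraphs, each of order at most $4$, that are pairwise edge-disjoint and whose edge sets together cover $E(T)$.
   Context: A subgraph $S$ of $T$ is induced if $S=T\langle V(S)\rangle$, i.e. it contains every edge of $T$ with both endvertices in $V(S)$. *)

(* A finite simple graph is a symmetric irreflexive
   relation e on a finType V; edges are unordered pairs {x,y} with e x y. *)
From mathcomp Require Import all_boot.
Set Implicit Arguments. Unset Strict Implicit. Unset Printing Implicit Defensive.

Definition simple_graph (V : finType) (e : rel V) : Prop :=
  symmetric e /\ irreflexive e.

Definition connected_graph (V : finType) (e : rel V) : Prop :=
  forall x y : V, connect e x y.

Definition acyclic_graph (V : finType) (e : rel V) : Prop :=
  forall s : seq V, 2 < size s -> ~~ (cycle e s && uniq s).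

Definition is_tree (V : finType) (e : rel V) : Prop :=
  [/\ simple_graph e, connected_graph e & acyclic_graph e].

(* An induced subgraph T<S> is determined by its vertex set S.
   The edge {x,y} belongs to T<S> iff e x y and x, y \in S. *)
Definition induced_edge (V : finType) (e : rel V) (S : {set V}) (x y : V) : bool :=
  [&& e x y, x \in S & y \in S].

Definition pairwise_edge_disjoint (V : finType) (e : rel V) (k : nat)
  (S : 'I_k -> {set V}) : Prop :=
  forall i j : 'I_k, i != j ->
    forall x y : V, ~~ (induced_edge e (S i) x y && induced_edge e (S j) x y).

Definition covers_edges (V : finType) (e : rel V) (k : nat)
  (S : 'I_k -> {set V}) : Prop :=
  forall x y : V, e x y -> exists i : 'I_k, induced_edge e (S i) x y.

From mathcomp Require Import all_boot zify.
Set Implicit Arguments. Unset Strict Implicit. Unset Printing Implicit Defensive.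

(* A partial cover of a vertex set U consists of pieces (sets of at most 4
   vertices whose induced subgraphs are pairwise edge-disjoint) and lonely edges
   (pairwise at distance at least 2 and inside no piece) covering the edges of
   T<U>, at cost 8 per piece and 4 per lonely edge, at most 3|U| in total.  Two
   lonely edges induce a matching, so pairing them up turns a partial cover of
   V(T) into at most (3n + 4)/8 pieces.
   Partial covers of every U exist by induction on |U|.  In a rooted component,
   every branch is either one of four small shapes or contains one of finitely
   many patterns: small subtrees meeting the rest of the forest in at most one
   vertex, each with a cover of its edges costing at most 3 per removed vertex.
   A partial cover of what remains after deleting a pattern extends by the
   pattern's own cover; the patterns themselves are checked by computation. *)

Section NonBacktracking.
Variables (T : eqType) (r : rel T).

Fixpoint nonbacktracking (s : seq T) : bool :=
  match s with
  | a :: ((b :: t) as s') =>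
      [&& r a b, (if t is c :: _ then a != c else true) & nonbacktracking s']
  | _ => true
  end.

Lemma nonbacktracking_cons3 a b c t :
  nonbacktracking [:: a, b, c & t] = [&& r a b, a != c & nonbacktracking [:: b, c & t]].
Proof. by []. Qed.

Lemma nonbacktracking_behead a s : nonbacktracking (a :: s) -> nonbacktracking s.
Proof. by case: s => //= b t /and3P[]. Qed.

Lemma nonbacktracking_catr s1 s2 : nonbacktracking (s1 ++ s2) -> nonbacktracking s2.
Proof. by elim: s1 => //= a s1 IH /nonbacktracking_behead. Qed.

Lemma nonbacktracking_path a s : nonbacktracking (a :: s) -> path r a s.
Proof. by elim: s a => //= b t IH a /and3P[-> _ /IH]. Qed.

Lemma nonbacktracking_rcons s a : nonbacktracking (rcons s a) -> nonbacktracking s.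
Proof.
elim: s => //= x s IH; case: s IH => //= y s IH /and3P[rxy xNz /IH ->].
by rewrite rxy andbT; case: s {IH} xNz.
Qed.

Lemma nonbacktracking_extend s x y z :
  nonbacktracking (s ++ [:: x; y]) -> r y z -> z != x ->
  nonbacktracking (s ++ [:: x; y; z]).
Proof.
elim: s => [|a s IH]; first by rewrite /= eq_sym => /andP[-> _] -> ->.
have [b [c [t [E1 E2]]]] : exists b c t,
    s ++ [:: x; y] = [:: b, c & t] /\ s ++ [:: x; y; z] = [:: b, c & t ++ [:: z]].
  case: s {IH} => [|b [|c t]] /=; first by exists x, y, [::].
  - by exists b, x, [:: y].
  - by exists b, c, (t ++ [:: x; y]); rewrite -catA.
rewrite !cat_cons E1 E2 !nonbacktracking_cons3 => /and3P[-> -> nb_bct] ryz zNx.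
by rewrite -E2 IH // E1.
Qed.

End NonBacktracking.

Lemma nonbacktracking_map (T T' : eqType) (r : rel T) (r' : rel T') (f : T -> T') s :
  (forall a b, r a b -> r' (f a) (f b)) ->
  (forall a b c, r a b -> r b c -> a != c -> f a != f c) ->
  nonbacktracking r s -> nonbacktracking r' (map f s).
Proof.
move=> f_edge f_loc_inj; elim: s => //= a [|b t] IH // /and3P[rab aNc nb_bt].
apply/and3P; split; [exact: f_edge | | exact: IH].
case: t aNc nb_bt {IH} => //= c t aNc /and3P[rbc _ _].
exact: f_loc_inj rab rbc aNc.
Qed.

Lemma uniq_head_neq_last (T : eqType) (x : T) s :
  uniq s -> 1 < size s -> head x s != last x s.
Proof.
case: s => // a [|b s] //= /andP[aNbs _] _.
by apply: contraNneq aNbs => ->; rewrite mem_last.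
Qed.

(* In an acyclic graph a repeated vertex in a walk would close a cycle, a loop
   or an immediate backtrack. *)
Lemma nonbacktracking_uniq (V : finType) (e : rel V) s :
  irreflexive e -> acyclic_graph e -> nonbacktracking e s -> uniq s.
Proof.
move=> eirr acyc; elim/last_ind: s => // t z IH nb_tz.
have uniq_t := IH (nonbacktracking_rcons nb_tz).
rewrite rcons_uniq uniq_t andbT; apply/negP => z_t.
case/splitPr: z_t nb_tz uniq_t => p1 p2.
rewrite -cats1 -catA cat_cons cats1 => /nonbacktracking_catr nb_c.
rewrite cat_uniq => /and3P[_ _ uniq_c].
have cyc : cycle e (z :: p2) by rewrite /= nonbacktracking_path.
case: p2 nb_c uniq_c cyc => [|w [|w' p2]] /=; first by rewrite eirr.
  by rewrite eqxx !andbF.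
by move=> _ uniq_c cyc; case/negP: (acyc [:: z, w, w' & p2] isT); apply/andP.
Qed.

Definition far_apart (T : eqType) (r : rel T) (l l' : T * T) : bool :=
  [&& l.1 != l'.1, l.1 != l'.2, l.2 != l'.1, l.2 != l'.2,
      ~~ r l.1 l'.1, ~~ r l.1 l'.2, ~~ r l.2 l'.1 & ~~ r l.2 l'.2].

Definition pair_joins (T : eqType) (x y : T) (l : T * T) : bool :=
  (l == (x, y)) || (l == (y, x)).

(* A pattern is a small tree on the vertices 0, ..., pat_size p - 1, given by
   adjacency lists whose heads point towards vertex 0, together with a cover of
   its edges by pieces and lonely edges.  An attached pattern hangs from the rest
   of the forest through vertex 0, which is kept while all other vertices are
   removed; an unattached pattern is a whole component and is removed entirely. *)
Record pattern := Pattern {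
  pat_adj : seq (seq nat);
  pat_attached : bool;
  pat_pieces : seq (seq nat);
  pat_lonely : seq (nat * nat) }.

Section PatternDefs.
Variable p : pattern.

Definition pat_size := size (pat_adj p).
Definition pat_verts := iota 0 pat_size.
Definition pat_all (P : pred nat) := all P pat_verts.
Definition pat_edge i j : bool := j \in nth [::] (pat_adj p) i.
Definition pat_removed i : bool := ~~ pat_attached p || (i != 0).

Definition pat_edge_disjoint (s t : seq nat) : bool :=
  pat_all (fun i => pat_all (fun j =>
    ~~ [&& pat_edge i j, i \in s, j \in s, i \in t & j \in t])).

Definition pat_parent i := head 0 (nth [::] (pat_adj p) i).

Fixpoint pat_ancestors_rec n i :=
  if n is n'.+1 then i :: (if i == 0 then [::] else pat_ancestors_rec n' (pat_parent i))
  else [::].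

Definition pat_ancestors i := pat_ancestors_rec pat_size i.

(* Up from [i] to its lowest common ancestor with [j], then down to [j]. *)
Definition pat_walk i j :=
  let ai := pat_ancestors i in
  let aj := pat_ancestors j in
  let l := head 0 [seq x <- ai | x \in aj] in
  take (index l ai) ai ++ l :: rev (take (index l aj) aj).

Definition pat_simple : bool :=
  [&& all (all (fun j => j < pat_size)) (pat_adj p),
      pat_all (fun i => pat_all (fun j => pat_edge i j == pat_edge j i)),
      pat_all (fun i => ~~ pat_edge i i) &
      has pat_removed pat_verts].

Definition pat_walks : bool :=
  pat_all (fun i => pat_all (fun j => (i != j) ==>
    let w := pat_walk i j in
    [&& nonbacktracking pat_edge w, head 0 w == i, last 0 w == j & 1 < size w])).

Definition pat_cover_ok : bool :=
  [&& all (fun s => (size s <= 4) && all (fun i => i < pat_size) s) (pat_pieces p),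
      pairwise pat_edge_disjoint (pat_pieces p),
      all (fun l => [&& pat_edge l.1 l.2, pat_removed l.1, pat_removed l.2 &
                        pat_attached p ==> ~~ pat_edge l.1 0 && ~~ pat_edge l.2 0])
          (pat_lonely p),
      pairwise (far_apart pat_edge) (pat_lonely p) &
      all (fun l => all (fun s => ~~ ((l.1 \in s) && (l.2 \in s))) (pat_pieces p))
          (pat_lonely p)].

Definition pat_covered : bool :=
  pat_all (fun i => pat_all (fun j => pat_edge i j && pat_removed i ==>
    has (fun s => (i \in s) && (j \in s)) (pat_pieces p) || has (pair_joins i j) (pat_lonely p))).

Definition pat_cost_ok : bool :=
  8 * size (pat_pieces p) + 4 * size (pat_lonely p) <= 3 * count pat_removed pat_verts.

Definition pat_ok : bool :=
  [&& pat_simple, pat_walks, pat_cover_ok, pat_covered & pat_cost_ok].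

End PatternDefs.

Section PatternTheory.
Variable p : pattern.
Hypothesis p_simple : pat_simple p.
Local Notation k := (pat_size p).

Lemma pat_allP (P : pred nat) : pat_all p P -> forall i, i < k -> P i.
Proof. by move/allP=> allP i lt_ik; apply: allP; rewrite mem_iota. Qed.

Lemma pat_edge_lt i j : pat_edge p i j -> (i < k) && (j < k).
Proof.
rewrite /pat_edge; case: (ltnP i k) => [lt_ik|le_ki]; last by rewrite nth_default.
case/and4P: p_simple => /(all_nthP [::])/(_ i lt_ik)/allP adj_lt _ _ _.
by move/adj_lt.
Qed.

Lemma pat_edge_sym i j : pat_edge p i j = pat_edge p j i.
Proof.
have edge_sym i' j' : pat_edge p i' j' -> pat_edge p j' i'.
  move=> ij; case/andP: (pat_edge_lt ij) => lt_i lt_j.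
  case/and4P: p_simple => _ /pat_allP/(_ i' lt_i)/pat_allP/(_ j' lt_j)/eqP <- _ _.
  exact: ij.
by apply/idP/idP; apply: edge_sym.
Qed.

Lemma pat_edge_irr i : pat_edge p i i = false.
Proof.
apply/negbTE/negP => ii; case/andP: (pat_edge_lt ii) => lt_i _.
by case/and4P: p_simple => _ _ /pat_allP/(_ i lt_i); rewrite ii.
Qed.

Lemma pat_adj_lt i : all (fun j => j < k) (nth [::] (pat_adj p) i).
Proof. by apply/allP => j ij; case/andP: (pat_edge_lt ij). Qed.

(* Only vertex 0 can be kept, so every edge has a removed endpoint. *)
Lemma pat_edge_removed i j : pat_edge p i j -> ~~ pat_removed p i -> pat_removed p j.
Proof.
rewrite /pat_removed negb_or !negbK => ij /andP[-> /eqP i0] /=.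
by apply: contraTneq ij => j0; rewrite i0 j0 pat_edge_irr.
Qed.

Lemma pat_kept i : ~~ pat_removed p i -> i = 0 /\ pat_attached p.
Proof. by rewrite /pat_removed negb_or !negbK => /andP[-> /eqP]. Qed.
End PatternTheory.

Section PartialCover.
Variables (V : finType) (e : rel V).

Definition neighbours (U : {set V}) (z : V) (s : seq V) : Prop :=
  forall w, (w \in U) && e z w = (w \in s).

Definition edge_disjoint (S T : {set V}) : bool :=
  [forall x, forall y, ~~ (induced_edge e S x y && induced_edge e T x y)].

(* Two lonely edges will later share one piece of order 4, hence the weights 8
   and 4 in the cost bound. *)
Record partial_cover (U : {set V}) (P : seq {set V}) (L : seq (V * V)) : Prop :=
  PartialCover {
    pieces_small : all (fun S : {set V} => (S \subset U) && (#|S| <= 4)) P;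
    pieces_disjoint : pairwise edge_disjoint P;
    lonely_edges : all (fun l => [&& e l.1 l.2, l.1 \in U & l.2 \in U]) L;
    lonely_far : pairwise (far_apart e) L;
    lonely_uncovered : all (fun l => all (fun S => ~~ induced_edge e S l.1 l.2) P) L;
    cover_edges : forall x y, x \in U -> y \in U -> e x y ->
      has (fun S => induced_edge e S x y) P || has (pair_joins x y) L;
    cover_cost : 8 * size P + 4 * size L <= 3 * #|U| }.

Definition coverable (U : {set V}) : Prop := exists P L, partial_cover U P L.
End PartialCover.

Lemma uniq_map_inj_in (T1 T2 : eqType) (f : T1 -> T2) s :
  uniq (map f s) -> {in s &, injective f}.
Proof.
elim: s => //= h s IH /andP[fhNs uniq_fs] a c; rewrite !inE.
case/orP=> [/eqP->|a_s]; case/orP=> [/eqP->|c_s] //.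
- by move=> fhfc; move: fhNs; rewrite fhfc map_f.
- by move=> fafh; move: fhNs; rewrite -fafh map_f.
- exact: IH.
Qed.

Section Reduce.
Variables (V : finType) (e : rel V).
Hypotheses (e_sym : symmetric e) (e_irr : irreflexive e) (acyc : acyclic_graph e).
Variables (U : {set V}) (p : pattern) (vs : seq V) (x0 : V).
Hypothesis p_ok : pat_ok p.
Hypothesis size_vs : size vs = pat_size p.
Hypothesis vs_in_U : all (fun v => v \in U) vs.
Hypothesis removed_neighbours : forall i, i < pat_size p -> pat_removed p i ->
  neighbours e U (nth x0 vs i) (map (nth x0 vs) (nth [::] (pat_adj p) i)).
Hypothesis adj_uniq : forall i, i < pat_size p ->
  uniq (map (nth x0 vs) (nth [::] (pat_adj p) i)).

Local Notation f := (nth x0 vs).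
Local Notation k := (pat_size p).

Let p_simple : pat_simple p. Proof. by case/and5P: p_ok. Qed.
Let p_walks : pat_walks p. Proof. by case/and5P: p_ok. Qed.
Let p_cover : pat_cover_ok p. Proof. by case/and5P: p_ok. Qed.
Let p_covered : pat_covered p. Proof. by case/and5P: p_ok. Qed.
Let p_cost : pat_cost_ok p. Proof. by case/and5P: p_ok. Qed.

Lemma embed_in i : i < k -> f i \in U.
Proof. by move=> lt_ik; apply: (all_nthP x0 vs_in_U); rewrite size_vs. Qed.

Lemma embed_edge i j : pat_edge p i j -> e (f i) (f j).
Proof.
move=> ij; case/andP: (pat_edge_lt p_simple ij) => lt_i lt_j.
have [rem_i|kept_i] := boolP (pat_removed p i).
  by move: (removed_neighbours lt_i rem_i (f j)); rewrite map_f // => /andP[].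
have ji : pat_edge p j i by rewrite pat_edge_sym.
move: (removed_neighbours lt_j (pat_edge_removed p_simple ij kept_i) (f i)).
by rewrite map_f // e_sym => /andP[].
Qed.

Lemma embed_loc_inj a b c : pat_edge p a b -> pat_edge p b c -> a != c -> f a != f c.
Proof.
move=> ab bc; apply: contra_neq; rewrite pat_edge_sym // in ab.
case/andP: (pat_edge_lt p_simple ab) => lt_b _.
exact: uniq_map_inj_in (adj_uniq lt_b) _ _ ab bc.
Qed.

(* Distinct vertices of a pattern are the ends of a nonbacktracking walk, whose
   image is nonbacktracking, hence a path, in the acyclic graph. *)
Lemma embed_inj i j : i < k -> j < k -> f i = f j -> i = j.
Proof.
move=> lt_i lt_j fifj; apply/eqP/negPn/negP => iNj.
move: (pat_allP (pat_allP p_walks lt_i) lt_j); rewrite iNj /=.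
case/and4P=> nb_w /eqP head_w /eqP last_w size_w.
have uniq_fw := nonbacktracking_uniq e_irr acyc
  (nonbacktracking_map embed_edge embed_loc_inj nb_w).
have := uniq_head_neq_last x0 uniq_fw; rewrite size_map => /(_ size_w).
case: (pat_walk p i j) head_w last_w size_w => // a w /= -> last_w _.
by rewrite (last_map f) last_w fifj eqxx.
Qed.

Lemma mem_embed i s : i < k -> all (fun a => a < k) s -> (f i \in map f s) = (i \in s).
Proof.
move=> lt_i lt_s; apply/mapP/idP => [[j j_s fifj]|]; last by exists i.
by rewrite (embed_inj lt_i _ fifj) //; apply: (allP lt_s).
Qed.

Lemma embed_edgeE i j : i < k -> j < k -> e (f i) (f j) = pat_edge p i j.
Proof.
move=> lt_i lt_j; have [rem_i|kept_i] := boolP (pat_removed p i).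
  move: (removed_neighbours lt_i rem_i (f j)).
  by rewrite embed_in // mem_embed // pat_adj_lt.
have [rem_j|kept_j] := boolP (pat_removed p j).
  move: (removed_neighbours lt_j rem_j (f i)).
  by rewrite embed_in // mem_embed ?pat_adj_lt // e_sym pat_edge_sym.
by rewrite (pat_kept kept_i).1 (pat_kept kept_j).1 e_irr pat_edge_irr.
Qed.

Definition removed : {set V} := [set x | x \in map f (filter (pat_removed p) (pat_verts p))].
Definition embed_set (s : seq nat) : {set V} := [set x | x \in map f s].
Definition embed_pair (l : nat * nat) : V * V := (f l.1, f l.2).
Local Notation U' := (U :\: removed).

Lemma embed_removed a : a < k -> pat_removed p a -> f a \in removed.
Proof. by move=> lt_a rem_a; rewrite inE map_f // mem_filter rem_a mem_iota. Qed.

Lemma removedP x : x \in removed -> exists2 i, i < k & pat_removed p i && (x == f i).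
Proof.
rewrite inE => /mapP[i]; rewrite mem_filter mem_iota => /andP[rem_i lt_i] ->.
by exists i; rewrite ?rem_i ?eqxx.
Qed.

Lemma embed_kept a : a < k -> f a \in U' -> a = 0 /\ pat_attached p.
Proof.
move=> lt_a /setDP[_ fa_kept]; apply: pat_kept.
by apply: contra fa_kept; apply: embed_removed.
Qed.

Lemma removed_remainder_edge a w : a < k -> pat_removed p a -> w \in U' ->
  e (f a) w -> pat_attached p && pat_edge p a 0.
Proof.
move=> lt_a rem_a w_kept faw.
have := removed_neighbours lt_a rem_a w; rewrite faw (setDP w_kept).1 /=.
case/esym/mapP=> c ac wfc; case/andP: (pat_edge_lt p_simple ac) => _ lt_c.
rewrite wfc in w_kept; have [c0 ->] := embed_kept lt_c w_kept.
by rewrite -c0; exact: ac.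
Qed.

Lemma removed_sub : removed \subset U.
Proof. by apply/subsetP => x /removedP[i lt_i /andP[_ /eqP->]]; apply: embed_in. Qed.

Lemma card_removed : #|removed| = count (pat_removed p) (pat_verts p).
Proof.
rewrite cardsE -size_filter -(size_map f); apply/card_uniqP.
rewrite map_inj_in_uniq ?filter_uniq ?iota_uniq //.
by move=> i j; rewrite !mem_filter !mem_iota /= => /andP[_ lt_i] /andP[_ lt_j]; apply: embed_inj.
Qed.

Lemma card_remainder_lt : #|U'| < #|U|.
Proof.
rewrite -(cardsID removed U) (setIidPr removed_sub) card_removed.
by case/and4P: p_simple => _ _ _; rewrite has_count; lia.
Qed.

Lemma embed_setP x s : all (fun a => a < k) s -> x \in embed_set s ->
  exists2 i, (i \in s) && (i < k) & x = f i.
Proof.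
move=> lt_s; rewrite inE => /mapP[i i_s ->]; exists i => //.
by rewrite i_s (allP lt_s).
Qed.

Lemma embed_set_remainder x s : all (fun a => a < k) s -> x \in U' ->
  x \in embed_set s -> x = f 0.
Proof.
move=> lt_s x_kept /(embed_setP lt_s)[i /andP[_ lt_i] xfi]; subst x.
by rewrite (embed_kept lt_i x_kept).1.
Qed.

Lemma embed_set_disjoint s t : all (fun a => a < k) s -> all (fun a => a < k) t ->
  pat_edge_disjoint p s t -> edge_disjoint e (embed_set s) (embed_set t).
Proof.
move=> lt_s lt_t st; apply/forallP => x; apply/forallP => y.
apply/negP => /andP[/and3P[exy x_s y_s] /and3P[_ x_t y_t]].
have [i /andP[i_s lt_i] xfi] := embed_setP lt_s x_s.
have [j /andP[j_s lt_j] yfj] := embed_setP lt_s y_s.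
have [i' /andP[i_t lt_i'] xfi'] := embed_setP lt_t x_t.
have [j' /andP[j_t lt_j'] yfj'] := embed_setP lt_t y_t.
rewrite (embed_inj lt_i' lt_i (etrans (esym xfi') xfi)) in i_t.
rewrite (embed_inj lt_j' lt_j (etrans (esym yfj') yfj)) in j_t.
move: (pat_allP (pat_allP st lt_i) lt_j).
by rewrite -(embed_edgeE lt_i lt_j) -xfi -yfj exy i_s j_s i_t j_t.
Qed.

Lemma embed_pair_far l l' : pat_edge p l.1 l.2 -> pat_edge p l'.1 l'.2 ->
  far_apart (pat_edge p) l l' -> far_apart e (embed_pair l) (embed_pair l').
Proof.
case: l l' => [a b] [c d] /= /(pat_edge_lt p_simple)/andP[lt_a lt_b].
move=> /(pat_edge_lt p_simple)/andP[lt_c lt_d].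
rewrite /far_apart /= !embed_edgeE //.
have embed_neq i j : i < k -> j < k -> i != j -> f i != f j.
  by move=> lt_i lt_j; apply: contra_neq => /(embed_inj lt_i lt_j).
by case/and5P=> ac ad bc bd ->; rewrite !embed_neq.
Qed.

Section Extend.
Variables (P' : seq {set V}) (L' : seq (V * V)).
Hypothesis cover' : partial_cover e U' P' L'.
Local Notation P := (P' ++ map embed_set (pat_pieces p)).
Local Notation L := (L' ++ map embed_pair (pat_lonely p)).

Let piece_lt s : s \in pat_pieces p -> all (fun a => a < k) s.
Proof. by case/and5P: p_cover => /allP pieces_ok _ _ _ _ /pieces_ok/andP[]. Qed.

Let lonely_ok l : l \in pat_lonely p ->
  [&& pat_edge p l.1 l.2, pat_removed p l.1, pat_removed p l.2 &
      pat_attached p ==> ~~ pat_edge p l.1 0 && ~~ pat_edge p l.2 0].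
Proof. by case/and5P: p_cover => _ _ /allP lonely_ok _ _ /lonely_ok. Qed.

Let piece_in_remainder S x : S \in P' -> x \in S -> x \in U'.
Proof. by move/(allP (pieces_small cover'))=> /andP[/subsetP sub_S _] /sub_S. Qed.

Let lonely_in_remainder l : l \in L' -> [&& e l.1 l.2, l.1 \in U' & l.2 \in U'].
Proof. exact: (allP (lonely_edges cover')). Qed.

Lemma extend_pieces_small : all (fun S : {set V} => (S \subset U) && (#|S| <= 4)) P.
Proof.
rewrite all_cat; apply/andP; split.
  apply/allP => S /(allP (pieces_small cover'))/andP[sub_S ->].
  by rewrite (subset_trans sub_S) ?subsetDl.
apply/allP => _ /mapP[s s_p ->]; apply/andP; split.
  by apply/subsetP => x /(embed_setP (piece_lt s_p))[i /andP[_ lt_i] ->]; apply: embed_in.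
rewrite cardsE (leq_trans (card_size _)) // size_map.
by case/and5P: p_cover => /allP/(_ s s_p)/andP[].
Qed.

Lemma extend_pieces_disjoint : pairwise (edge_disjoint e) P.
Proof.
rewrite pairwise_cat (pieces_disjoint cover') /=; apply/andP; split.
  apply/allrelP => S _ S_P' /mapP[s s_p ->].
  apply/forallP => x; apply/forallP => y.
  apply/negP => /andP[/and3P[exy x_S y_S] /and3P[_ x_s y_s]].
  rewrite (embed_set_remainder (piece_lt s_p) (piece_in_remainder S_P' x_S) x_s) in exy.
  by rewrite (embed_set_remainder (piece_lt s_p) (piece_in_remainder S_P' y_S) y_s) e_irr in exy.
rewrite pairwise_map; apply: (sub_in_pairwise (P := [pred s | all (fun a => a < k) s])).
- by move=> s t; apply: embed_set_disjoint.
- exact/allP.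
- by case/and5P: p_cover.
Qed.

Lemma extend_lonely_edges : all (fun l => [&& e l.1 l.2, l.1 \in U & l.2 \in U]) L.
Proof.
rewrite all_cat; apply/andP; split.
  apply/allP => l /lonely_in_remainder/and3P[-> /setDP[-> _] /setDP[-> _]].
  by [].
apply/allP => _ /mapP[l /lonely_ok/and3P[l12 _ _] ->] /=.
case/andP: (pat_edge_lt p_simple l12) => lt_1 lt_2.
by rewrite embed_edge // !embed_in.
Qed.

(* A lonely edge of the pattern avoids vertex 0 and its neighbours, and vertex 0
   is the only vertex of the pattern with neighbours outside it. *)
Lemma remainder_pattern_far l l' : l \in L' -> l' \in pat_lonely p ->
  far_apart e l (embed_pair l').
Proof.
case: l' => a b l_L' /lonely_ok/and4P[/= ab rem_a rem_b no0].
case/andP: (pat_edge_lt p_simple ab) => lt_a lt_b.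
case/and3P: (lonely_in_remainder l_L') => _ l1 l2.
have kept_neq x c : x \in U' -> c < k -> pat_removed p c -> x != f c.
  by move=> /setDP[_ x_kept] lt_c rem_c; apply: contraNneq x_kept => ->; apply: embed_removed.
have kept_far x c : x \in U' -> c < k -> pat_removed p c ->
    (pat_attached p ==> ~~ pat_edge p c 0) -> ~~ e x (f c).
  move=> x_kept lt_c rem_c c0; apply/negP; rewrite e_sym.
  by move/(removed_remainder_edge lt_c rem_c x_kept)=> /andP[att c0']; rewrite att c0' in c0.
have [a0 b0] : (pat_attached p ==> ~~ pat_edge p a 0) /\ (pat_attached p ==> ~~ pat_edge p b 0).
  by case: (pat_attached p) no0 => //= /andP[].
by rewrite /far_apart /= !kept_neq ?kept_far.
Qed.

Lemma extend_lonely_far : pairwise (far_apart e) L.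
Proof.
rewrite pairwise_cat (lonely_far cover') /=; apply/andP; split.
  by apply/allrelP => l _ l_L' /mapP[l' l'_p ->]; apply: remainder_pattern_far.
rewrite pairwise_map; apply: (sub_in_pairwise (P := [pred l | pat_edge p l.1 l.2])).
- by move=> l l' /= l12 l'12; apply: embed_pair_far.
- by apply/allP => l /lonely_ok/and3P[].
- by case/and5P: p_cover.
Qed.

Lemma extend_lonely_uncovered :
  all (fun l => all (fun S => ~~ induced_edge e S l.1 l.2) P) L.
Proof.
rewrite all_cat; apply/andP; split.
  apply/allP => l l_L'; rewrite all_cat (allP (lonely_uncovered cover') _ l_L') /=.
  apply/allP => _ /mapP[s s_p ->]; apply/negP => /and3P[l12 l1_s l2_s].
  case/and3P: (lonely_in_remainder l_L') => _ l1 l2.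
  rewrite (embed_set_remainder (piece_lt s_p) l1 l1_s) in l12.
  by rewrite (embed_set_remainder (piece_lt s_p) l2 l2_s) e_irr in l12.
apply/allP => _ /mapP[[a b] ab_p ->] /=; rewrite all_cat.
case/lonely_ok/and4P: (ab_p) => /= /(pat_edge_lt p_simple)/andP[lt_a lt_b] rem_a rem_b _.
apply/andP; split.
  apply/allP => S S_P'; apply/negP => /and3P[_ a_S _].
  by move: (piece_in_remainder S_P' a_S); rewrite inE embed_removed.
apply/allP => _ /mapP[s s_p ->]; apply/negP => /and3P[_ a_s b_s].
case/and5P: p_cover => _ _ _ _ /allP/(_ _ ab_p)/allP/(_ _ s_p) /=.
by move: a_s b_s; rewrite !inE !mem_embed ?piece_lt // => -> ->.
Qed.

Lemma removed_edge_covered x y : x \in removed -> y \in U -> e x y ->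
  has (fun S => induced_edge e S x y) P || has (pair_joins x y) L.
Proof.
move=> /removedP[i lt_i /andP[rem_i /eqP ->]] y_U fiy.
have := removed_neighbours lt_i rem_i y; rewrite y_U fiy /=.
move=> /esym/mapP[j ij ->]; have {}ij : pat_edge p i j by [].
case/andP: (pat_edge_lt p_simple ij) => _ lt_j.
move: (pat_allP (pat_allP p_covered lt_i) lt_j); rewrite ij rem_i /=.
rewrite !has_cat; case/orP=> [/hasP[s s_p /andP[i_s j_s]]|/hasP[l l_p ijl]].
  apply/orP; left; apply/orP; right; apply/hasP.
  by exists (embed_set s); rewrite ?map_f // /induced_edge embed_edge // !inE !map_f.
apply/orP; right; apply/orP; right; apply/hasP.
exists (embed_pair l); first exact: map_f.
by case/orP: ijl => /eqP->; rewrite /pair_joins eqxx ?orbT.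
Qed.

Lemma extend_cover_edges x y : x \in U -> y \in U -> e x y ->
  has (fun S => induced_edge e S x y) P || has (pair_joins x y) L.
Proof.
move=> x_U y_U exy; have [x_rem|x_kept] := boolP (x \in removed).
  exact: removed_edge_covered.
have [y_rem|y_kept] := boolP (y \in removed).
  rewrite e_sym in exy; case/orP: (removed_edge_covered y_rem x_U exy).
  - move=> /hasP[S S_P /and3P[eyx y_S x_S]]; apply/orP; left; apply/hasP.
    by exists S; rewrite // /induced_edge e_sym eyx x_S.
  - move=> /hasP[l l_L jl]; apply/orP; right; apply/hasP.
    by exists l; rewrite // /pair_joins orbC.
have x' : x \in U' by rewrite inE x_kept.
have y' : y \in U' by rewrite inE y_kept.
rewrite !has_cat; case/orP: (cover_edges cover' x' y' exy) => ->; by rewrite ?orbT.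
Qed.

Lemma extend_cover_cost : 8 * size P + 4 * size L <= 3 * #|U|.
Proof.
rewrite !size_cat !size_map -(cardsID removed U) (setIidPr removed_sub) card_removed.
by move: (cover_cost cover') p_cost; rewrite /pat_cost_ok; lia.
Qed.
End Extend.

Lemma reduce_pattern :
  (forall U' : {set V}, #|U'| < #|U| -> coverable e U') -> coverable e U.
Proof.
move=> IH; have [P' [L' cover']] := IH _ card_remainder_lt.
exists (P' ++ map embed_set (pat_pieces p)), (L' ++ map embed_pair (pat_lonely p)).
split.
- exact: extend_pieces_small cover'.
- exact: extend_pieces_disjoint cover'.
- exact: extend_lonely_edges cover'.
- exact: extend_lonely_far cover'.
- exact: extend_lonely_uncovered cover'.
- exact: extend_cover_edges cover'.
- exact: extend_cover_cost cover'.
Qed.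
End Reduce.

(* In pat_* vertex 0 is the kept centre, whose branches are listed in the name;
   in pat_xy_* it is the kept parent of the centre 1.  The pat_root_* patterns
   are whole components, rooted at 0. *)
Definition pat_LLL := Pattern [:: [:: 1; 2; 3]; [:: 0]; [:: 0]; [:: 0]] true
  [:: [:: 0; 1; 2; 3]] [::].
Definition pat_LP := Pattern [:: [:: 1; 2]; [:: 0]; [:: 0; 3]; [:: 2]] true
  [:: [:: 1; 0; 2; 3]] [::].
Definition pat_PPPP := Pattern [:: [:: 1; 3; 5; 7]; [:: 0; 2]; [:: 1]; [:: 0; 4]; [:: 3];
  [:: 0; 6]; [:: 5]; [:: 0; 8]; [:: 7]] true
  [:: [:: 2; 1; 0; 3]; [:: 6; 5; 0; 7]; [:: 4; 3; 8; 7]] [::].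
Definition pat_XP := Pattern [:: [:: 1; 6]; [:: 0; 2; 4]; [:: 1; 3]; [:: 2]; [:: 1; 5]; [:: 4];
  [:: 0; 7]; [:: 6]] true
  [:: [:: 7; 6; 0; 1]; [:: 3; 2; 1; 4]] [:: (4, 5)].
Definition pat_XLL := Pattern [:: [:: 1; 6; 7]; [:: 0; 2; 4]; [:: 1; 3]; [:: 2]; [:: 1; 5]; [:: 4];
  [:: 0]; [:: 0]] true
  [:: [:: 0; 6; 7; 1]; [:: 3; 2; 1; 4]] [:: (4, 5)].
Definition pat_XXX := Pattern [:: [:: 1; 6; 11]; [:: 0; 2; 4]; [:: 1; 3]; [:: 2]; [:: 1; 5]; [:: 4];
  [:: 0; 7; 9]; [:: 6; 8]; [:: 7]; [:: 6; 10]; [:: 9]; [:: 0; 12; 14]; [:: 11; 13]; [:: 12];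
  [:: 11; 15]; [:: 14]] true
  [:: [:: 0; 1; 6; 11]; [:: 3; 2; 1; 4]; [:: 8; 7; 6; 9]; [:: 13; 12; 11; 14]]
  [:: (4, 5); (9, 10); (14, 15)].
Definition pat_XXL := Pattern [:: [:: 1; 6; 11]; [:: 0; 2; 4]; [:: 1; 3]; [:: 2]; [:: 1; 5]; [:: 4];
  [:: 0; 7; 9]; [:: 6; 8]; [:: 7]; [:: 6; 10]; [:: 9]; [:: 0]] true
  [:: [:: 0; 11; 1; 6]; [:: 3; 2; 1; 4]; [:: 8; 7; 6; 9]] [:: (4, 5); (9, 10)].
Definition pat_YP := Pattern [:: [:: 1; 7]; [:: 0; 2]; [:: 1; 3; 5]; [:: 2; 4]; [:: 3]; [:: 2; 6];
  [:: 5]; [:: 0; 8]; [:: 7]] true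
  [:: [:: 8; 7; 0; 1]; [:: 2; 1; 3; 5]; [:: 3; 4; 5; 6]] [::].
Definition pat_YL := Pattern [:: [:: 1; 7]; [:: 0; 2]; [:: 1; 3; 5]; [:: 2; 4]; [:: 3]; [:: 2; 6];
  [:: 5]; [:: 0]] true
  [:: [:: 7; 0; 1; 2]; [:: 4; 3; 2; 5]] [:: (5, 6)].
Definition pat_YX := Pattern [:: [:: 1; 7]; [:: 0; 2]; [:: 1; 3; 5]; [:: 2; 4]; [:: 3]; [:: 2; 6];
  [:: 5]; [:: 0; 8; 10]; [:: 7; 9]; [:: 8]; [:: 7; 11]; [:: 10]] true
  [:: [:: 7; 0; 1; 2]; [:: 4; 3; 2; 5]; [:: 9; 8; 7; 10]] [:: (5, 6); (10, 11)].
Definition pat_YY := Pattern [:: [:: 1; 7]; [:: 0; 2]; [:: 1; 3; 5]; [:: 2; 4]; [:: 3]; [:: 2; 6];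
  [:: 5]; [:: 0; 8]; [:: 7; 9; 11]; [:: 8; 10]; [:: 9]; [:: 8; 12]; [:: 11]] true
  [:: [:: 2; 1; 0; 7]; [:: 4; 3; 2; 5]; [:: 8; 7; 9; 11]] [:: (5, 6); (9, 10); (11, 12)].

Definition pat_xy_LL := Pattern [:: [:: 1]; [:: 0; 2; 3]; [:: 1]; [:: 1]] true
  [:: [:: 0; 1; 2; 3]] [::].
Definition pat_xy_P := Pattern [:: [:: 1]; [:: 0; 2]; [:: 1; 3]; [:: 2]] true
  [:: [:: 0; 1; 2; 3]] [::].
Definition pat_xy_PPP := Pattern [:: [:: 1]; [:: 0; 2; 4; 6]; [:: 1; 3]; [:: 2]; [:: 1; 5]; [:: 4];
  [:: 1; 7]; [:: 6]] true
  [:: [:: 3; 2; 1; 0]; [:: 5; 4; 1; 6]] [:: (6, 7)].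
Definition pat_xy_LX := Pattern [:: [:: 1]; [:: 0; 2; 3]; [:: 1]; [:: 1; 4; 6]; [:: 3; 5]; [:: 4];
  [:: 3; 7]; [:: 6]] true
  [:: [:: 1; 0; 2; 3]; [:: 5; 4; 3; 6]] [:: (6, 7)].
Definition pat_xy_XX := Pattern [:: [:: 1]; [:: 0; 2; 7]; [:: 1; 3; 5]; [:: 2; 4]; [:: 3];
  [:: 2; 6]; [:: 5]; [:: 1; 8; 10]; [:: 7; 9]; [:: 8]; [:: 7; 11]; [:: 10]] true
  [:: [:: 1; 0; 2; 7]; [:: 4; 3; 2; 5]; [:: 9; 8; 7; 10]] [:: (5, 6); (10, 11)].
Definition pat_xy_Y := Pattern [:: [:: 1]; [:: 0; 2]; [:: 1; 3]; [:: 2; 4; 6]; [:: 3; 5]; [:: 4];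
  [:: 3; 7]; [:: 6]] true
  [:: [:: 0; 1; 2; 3]; [:: 5; 4; 3; 6]] [:: (6, 7)].

Definition pat_root := Pattern [:: [::]] false [::] [::].
Definition pat_root_L := Pattern [:: [:: 1]; [:: 0]] false [::] [:: (0, 1)].
Definition pat_root_LL := Pattern [:: [:: 1; 2]; [:: 0]; [:: 0]] false [:: [:: 0; 1; 2]] [::].
Definition pat_root_P := Pattern [:: [:: 1]; [:: 0; 2]; [:: 1]] false [:: [:: 0; 1; 2]] [::].
Definition pat_root_PP := Pattern [:: [:: 1; 3]; [:: 0; 2]; [:: 1]; [:: 0; 4]; [:: 3]] false
  [:: [:: 2; 1; 0; 3]] [:: (3, 4)].
Definition pat_root_PPP := Pattern [:: [:: 1; 3; 5]; [:: 0; 2]; [:: 1]; [:: 0; 4]; [:: 3];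
  [:: 0; 6]; [:: 5]] false
  [:: [:: 2; 1; 0; 3]; [:: 0; 5; 6]] [:: (3, 4)].
Definition pat_root_X :=
  Pattern [:: [:: 1]; [:: 0; 2; 4]; [:: 1; 3]; [:: 2]; [:: 1; 5]; [:: 4]] false
  [:: [:: 0; 1; 2; 3]; [:: 1; 4; 5]] [::].
Definition pat_root_LX := Pattern [:: [:: 1; 2]; [:: 0]; [:: 0; 3; 5]; [:: 2; 4]; [:: 3]; [:: 2; 6];
  [:: 5]] false
  [:: [:: 1; 0; 2; 3]; [:: 2; 5; 6]] [:: (3, 4)].
Definition pat_root_XX := Pattern [:: [:: 1; 6]; [:: 0; 2; 4]; [:: 1; 3]; [:: 2]; [:: 1; 5]; [:: 4];
  [:: 0; 7; 9]; [:: 6; 8]; [:: 7]; [:: 6; 10]; [:: 9]] false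
  [:: [:: 3; 2; 1; 0]; [:: 8; 7; 6; 0]; [:: 1; 4; 6; 9]] [:: (4, 5); (9, 10)].
Definition pat_root_Y := Pattern [:: [:: 1]; [:: 0; 2]; [:: 1; 3; 5]; [:: 2; 4]; [:: 3]; [:: 2; 6];
  [:: 5]] false
  [:: [:: 0; 1; 2; 3]; [:: 2; 5; 6]] [:: (3, 4)].

Lemma count_mem_le_uniq (T : eqType) (s t : seq T) :
  uniq t -> (forall a, count_mem a s <= count_mem a t) -> uniq s.
Proof.
move=> uniq_t; elim: s => //= a s IH le_st; apply/andP; split.
  have := le_st a; rewrite /= eqxx (count_uniq_mem _ uniq_t) => le_a.
  apply/negP; rewrite -has_pred1 has_count => a_s.
  by move: le_a; case: (a \in t) => /=; lia.
by apply: IH => b; have := le_st b; rewrite /=; lia.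
Qed.

Fixpoint all_prop (P : nat -> Prop) (s : seq nat) : Prop :=
  if s is i :: s' then P i /\ all_prop P s' else True.

Lemma all_propP (P : nat -> Prop) n : all_prop P (iota 0 n) -> forall i, i < n -> P i.
Proof.
suff all_iota m : all_prop P (iota m n) -> forall i, m <= i < m + n -> P i.
  by move=> /all_iota P_n i lt_in; apply: P_n.
elim: n m => [|n IH] m /=; first by move=> _ i; lia.
move=> [Pm Pn] i /andP[le_mi lt_i]; case: (ltngtP m i) le_mi => // [lt_mi|<-] _.
  by apply: (IH m.+1) => //; rewrite lt_mi addSnnS.
by [].
Qed.

Section Branches.
Variables (V : finType) (e : rel V).
Hypotheses (e_sym : symmetric e) (e_irr : irreflexive e) (acyc : acyclic_graph e).

(* The shape of the branch of y, seen from its parent x: L is a leaf, P a path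
   with two edges, X has two P-branches and Y one X-branch. *)
Definition branch_L (U : {set V}) (x y : V) := y \in U /\ neighbours e U y [:: x].
Definition branch_P (U : {set V}) (x y : V) := exists z,
  [/\ y \in U, neighbours e U y [:: x; z], uniq [:: x; z] & branch_L U y z].
Definition branch_X (U : {set V}) (x y : V) := exists v1 v2,
  [/\ y \in U, neighbours e U y [:: x; v1; v2], uniq [:: x; v1; v2],
      branch_P U y v1 & branch_P U y v2].
Definition branch_Y (U : {set V}) (x y : V) := exists a,
  [/\ y \in U, neighbours e U y [:: x; a], uniq [:: x; a] & branch_X U y a].

Definition classified (U : {set V}) (x y : V) :=
  coverable e U \/ branch_L U x y \/ branch_P U x y \/ branch_X U x y \/ branch_Y U x y.

Definition small_children (Ls Ps Xs Ys : seq V) : Prop :=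
  (exists c, [/\ Ls = [::], Ps = [::], Xs = [::] & Ys = [:: c]]) \/
  (exists a1 a2, [/\ Ls = [::], Ps = [::], Xs = [:: a1; a2] & Ys = [::]]) \/
  (exists l a, [/\ Ls = [:: l], Ps = [::], Xs = [:: a] & Ys = [::]]) \/
  (exists a, [/\ Ls = [::], Ps = [::], Xs = [:: a] & Ys = [::]]) \/
  (exists p1 p2 p3, [/\ Ls = [::], Ps = [:: p1; p2; p3], Xs = [::] & Ys = [::]]) \/
  (exists p1 p2, [/\ Ls = [::], Ps = [:: p1; p2], Xs = [::] & Ys = [::]]) \/
  (exists p1, [/\ Ls = [::], Ps = [:: p1], Xs = [::] & Ys = [::]]) \/
  (exists l1 l2, [/\ Ls = [:: l1; l2], Ps = [::], Xs = [::] & Ys = [::]]) \/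
  (exists l1, [/\ Ls = [:: l1], Ps = [::], Xs = [::] & Ys = [::]]) \/
  [/\ Ls = [::], Ps = [::], Xs = [::] & Ys = [::]].

Ltac clear_props :=
  repeat match goal with H : ?P |- _ => match type of P with Prop => clear H end end.

Ltac solve_uniq := first [ by [] | assumption |
  match goal with H : is_true (uniq _) |- _ =>
    apply: (count_mem_le_uniq H) => ?; do 4 rewrite /= ?count_cat; clear_props; lia end ].

(* The side conditions of reduce_pattern, for an explicit list of vertices, unfold
   to the neighbourhood and distinctness facts carried by the branch shapes. *)
Ltac reduce_with pat vs0 x00 IH :=
  apply: (@reduce_pattern _ _ e_sym e_irr acyc _ pat vs0 x00 _ _ _ _ _ IH);
  [ by vm_compute
  | by []
  | rewrite /=; repeat (apply/andP; split); by []
  | apply: all_propP; cbn -[neighbours]; repeat split; try (by []); move=> _; assumption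
  | apply: all_propP; cbn -[uniq]; repeat split; solve_uniq ].

Ltac take_L H z := let h := fresh in
  have h := H z ltac:(rewrite !inE eqxx ?orbT; done); case: h => ? ?.
Ltac take_P H z w := let h := fresh in
  have h := H z ltac:(rewrite !inE eqxx ?orbT; done); case: h => w [? ? ? [? ?]].
Ltac take_X H a v1 l1 v2 l2 := let h := fresh in
  have h := H a ltac:(rewrite !inE eqxx ?orbT; done);
  case: h => v1 [v2 [? ? ? [l1 [? ? ? [? ?]]] [l2 [? ? ? [? ?]]]]].
Ltac take_Y H c a v1 l1 v2 l2 := let h := fresh in
  have h := H c ltac:(rewrite !inE eqxx ?orbT; done);
  case: h => a [? ? ? [v1 [v2 [? ? ? [l1 [? ? ? [? ?]]] [l2 [? ? ? [? ?]]]]]]].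

Section Children.
Variable U : {set V}.

Lemma neighbours_perm z s s' : perm_eq s s' -> neighbours e U z s -> neighbours e U z s'.
Proof. by move=> perm_ss' nbr_s w; rewrite nbr_s (perm_mem perm_ss'). Qed.

Lemma sort_branches y cs : (forall z, z \in cs -> classified U y z) ->
  coverable e U \/ exists Ls Ps Xs Ys,
    [/\ perm_eq cs (Ls ++ Ps ++ Xs ++ Ys), {in Ls, forall z, branch_L U y z},
        {in Ps, forall z, branch_P U y z}, {in Xs, forall z, branch_X U y z}
      & {in Ys, forall z, branch_Y U y z}].
Proof.
elim: cs => [|z cs IHcs] cls; first by right; exists [::], [::], [::], [::].
have [|[Ls [Ps [Xs [Ys [/permP perm_c HL HP HX HY]]]]]] :=
  IHcs (fun z' z'_cs => cls z' (@mem_behead _ (z :: cs) _ z'_cs)); first by left.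
have cons_in (A : seq V) (Q : V -> Prop) : Q z -> {in A, forall z, Q z} ->
    {in z :: A, forall z, Q z}.
  by move=> Qz QA z'; rewrite inE => /orP[/eqP->|/QA].
have perm_cons_in (A B C D : seq V) : perm_eq cs (A ++ B ++ C ++ D) ->
    [/\ perm_eq (z :: cs) (A ++ B ++ C ++ z :: D), perm_eq (z :: cs) (A ++ B ++ z :: C ++ D)
      & perm_eq (z :: cs) (A ++ z :: B ++ C ++ D)].
  move=> /permP perm_AD; split; apply/permP => q; move: (perm_AD q);
  do 3 rewrite /= ?count_cat; move=> ->; clear_props; lia.
case: (cls z (mem_head _ _)) => [|[z_L|[z_P|[z_X|z_Y]]]]; first by left.
- right; exists (z :: Ls), Ps, Xs, Ys; split => //; last exact: cons_in.
  by apply/permP => q; rewrite /= perm_c.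
- right; exists Ls, (z :: Ps), Xs, Ys; split => //; last exact: cons_in.
  by case: (perm_cons_in Ls Ps Xs Ys (introT permP perm_c)).
- right; exists Ls, Ps, (z :: Xs), Ys; split => //; last exact: cons_in.
  by case: (perm_cons_in Ls Ps Xs Ys (introT permP perm_c)).
- right; exists Ls, Ps, Xs, (z :: Ys); split => //; last exact: cons_in.
  by case: (perm_cons_in Ls Ps Xs Ys (introT permP perm_c)).
Qed.

Hypothesis IH : forall U' : {set V}, #|U'| < #|U| -> coverable e U'.

Lemma reduce_children_LP y Ls Ps : y \in U -> uniq (Ls ++ Ps) ->
  {in Ls, forall z, branch_L U y z} -> {in Ps, forall z, branch_P U y z} ->
  coverable e U \/ small_children Ls Ps [::] [::].
Proof.
move=> y_U uniq_c HL HP.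
case: Ls uniq_c HL => [|l1 [|l2 [|l3 Ls]]] uniq_c HL.
- case: Ps uniq_c HP => [|p1 [|p2 [|p3 [|p4 Ps]]]] uniq_c HP.
  + by right; do 9 right.
  + by right; do 6 right; left; exists p1.
  + by right; do 5 right; left; exists p1, p2.
  + by right; do 4 right; left; exists p1, p2, p3.
  + left; take_P HP p1 w1; take_P HP p2 w2; take_P HP p3 w3; take_P HP p4 w4.
    reduce_with pat_PPPP [:: y; p1; w1; p2; w2; p3; w3; p4; w4] y IH.
- case: Ps uniq_c HP => [|p1 Ps] uniq_c HP.
  + by right; do 8 right; left; exists l1.
  + left; take_L HL l1; take_P HP p1 w1.
    reduce_with pat_LP [:: y; l1; p1; w1] y IH.
- case: Ps uniq_c HP => [|p1 Ps] uniq_c HP.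
  + by right; do 7 right; left; exists l1, l2.
  + left; take_L HL l1; take_P HP p1 w1.
    reduce_with pat_LP [:: y; l1; p1; w1] y IH.
- left; take_L HL l1; take_L HL l2; take_L HL l3.
  reduce_with pat_LLL [:: y; l1; l2; l3] y IH.
Qed.

Lemma reduce_children_LPX y Ls Ps Xs : y \in U -> uniq (Ls ++ Ps ++ Xs) ->
  {in Ls, forall z, branch_L U y z} -> {in Ps, forall z, branch_P U y z} ->
  {in Xs, forall z, branch_X U y z} ->
  coverable e U \/ small_children Ls Ps Xs [::].
Proof.
move=> y_U uniq_c HL HP HX.
case: Xs uniq_c HX => [|a1 [|a2 [|a3 Xs]]] uniq_c HX.
- by rewrite cats0 in uniq_c; apply: reduce_children_LP uniq_c HL HP.
- case: Ps uniq_c HP => [|p1 Ps] uniq_c HP.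
  + case: Ls uniq_c HL => [|l1 [|l2 Ls]] uniq_c HL.
    * by right; do 3 right; left; exists a1.
    * by right; do 2 right; left; exists l1, a1.
    * left; take_X HX a1 v1 u1 v2 u2; take_L HL l1; take_L HL l2.
      reduce_with pat_XLL [:: y; a1; v1; u1; v2; u2; l1; l2] y IH.
  + left; take_X HX a1 v1 u1 v2 u2; take_P HP p1 w1.
    reduce_with pat_XP [:: y; a1; v1; u1; v2; u2; p1; w1] y IH.
- case: Ps uniq_c HP => [|p1 Ps] uniq_c HP.
  + case: Ls uniq_c HL => [|l1 Ls] uniq_c HL.
    * by right; right; left; exists a1, a2.
    * left; take_X HX a1 v1 u1 v2 u2; take_X HX a2 v3 u3 v4 u4; take_L HL l1.
      reduce_with pat_XXL [:: y; a1; v1; u1; v2; u2; a2; v3; u3; v4; u4; l1] y IH.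
  + left; take_X HX a1 v1 u1 v2 u2; take_P HP p1 w1.
    reduce_with pat_XP [:: y; a1; v1; u1; v2; u2; p1; w1] y IH.
- left; take_X HX a1 v1 u1 v2 u2; take_X HX a2 v3 u3 v4 u4; take_X HX a3 v5 u5 v6 u6.
  reduce_with pat_XXX
    [:: y; a1; v1; u1; v2; u2; a2; v3; u3; v4; u4; a3; v5; u5; v6; u6] y IH.
Qed.

Lemma reduce_children y Ls Ps Xs Ys : y \in U -> uniq (Ls ++ Ps ++ Xs ++ Ys) ->
  {in Ls, forall z, branch_L U y z} -> {in Ps, forall z, branch_P U y z} ->
  {in Xs, forall z, branch_X U y z} -> {in Ys, forall z, branch_Y U y z} ->
  coverable e U \/ small_children Ls Ps Xs Ys.
Proof.
move=> y_U uniq_c HL HP HX HY.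
case: Ys uniq_c HY => [|c1 [|c2 Ys]] uniq_c HY.
- by rewrite cats0 in uniq_c; apply: reduce_children_LPX uniq_c HL HP HX.
- case: Xs uniq_c HX => [|a1 Xs] uniq_c HX.
  + case: Ps uniq_c HP => [|p1 Ps] uniq_c HP.
    * case: Ls uniq_c HL => [|l1 Ls] uniq_c HL.
      -- by right; left; exists c1.
      -- left; take_Y HY c1 b1 v1 u1 v2 u2; take_L HL l1.
         reduce_with pat_YL [:: y; c1; b1; v1; u1; v2; u2; l1] y IH.
    * left; take_Y HY c1 b1 v1 u1 v2 u2; take_P HP p1 w1.
      reduce_with pat_YP [:: y; c1; b1; v1; u1; v2; u2; p1; w1] y IH.
  + left; take_Y HY c1 b1 v1 u1 v2 u2; take_X HX a1 v3 u3 v4 u4.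
    reduce_with pat_YX [:: y; c1; b1; v1; u1; v2; u2; a1; v3; u3; v4; u4] y IH.
- left; take_Y HY c1 b1 v1 u1 v2 u2; take_Y HY c2 b2 v3 u3 v4 u4.
  reduce_with pat_YY [:: y; c1; b1; v1; u1; v2; u2; c2; b2; v3; u3; v4; u4] y IH.
Qed.

Ltac case_small_children H :=
  case: H => [[c [-> -> -> ->]]|[[a1 [a2 [-> -> -> ->]]]|[[l [a [-> -> -> ->]]]|
    [[a [-> -> -> ->]]|[[p1 [p2 [p3 [-> -> -> ->]]]]|[[p1 [p2 [-> -> -> ->]]]|
    [[p1 [-> -> -> ->]]|[[l1 [l2 [-> -> -> ->]]]|[[l1 [-> -> -> ->]]|[-> -> -> ->]]]]]]]]]].

Lemma classify_branch x y cs : x \in U -> y \in U -> x \notin cs -> uniq cs ->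
  neighbours e U y (x :: cs) -> (forall z, z \in cs -> classified U y z) ->
  classified U x y.
Proof.
move=> x_U y_U x_cs uniq_cs nbr_y cls.
have [|[Ls [Ps [Xs [Ys [perm_c HL HP HX HY]]]]]] := sort_branches cls; first by left.
have uniq_c : uniq (Ls ++ Ps ++ Xs ++ Ys) by rewrite -(perm_uniq perm_c).
have uniq_xc : uniq (x :: Ls ++ Ps ++ Xs ++ Ys) by rewrite /= uniq_c andbT -(perm_mem perm_c).
have {}nbr_y : neighbours e U y (x :: Ls ++ Ps ++ Xs ++ Ys).
  by apply: neighbours_perm nbr_y; rewrite perm_cons.
have [|small] := reduce_children y_U uniq_c HL HP HX HY; first by left.
move: nbr_y uniq_xc HL HP HX HY; case_small_children small => nbr_y uniq_xc HL HP HX HY;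
  cbn -[neighbours] in nbr_y.
- left; take_Y HY c b1 v1 u1 v2 u2.
  reduce_with pat_xy_Y [:: x; y; c; b1; v1; u1; v2; u2] x IH.
- left; take_X HX a1 v1 u1 v2 u2; take_X HX a2 v3 u3 v4 u4.
  reduce_with pat_xy_XX [:: x; y; a1; v1; u1; v2; u2; a2; v3; u3; v4; u4] x IH.
- left; take_L HL l; take_X HX a v1 u1 v2 u2.
  reduce_with pat_xy_LX [:: x; y; l; a; v1; u1; v2; u2] x IH.
- do 4 right; exists a; split => //; exact: HX (mem_head _ _).
- left; take_P HP p1 w1; take_P HP p2 w2; take_P HP p3 w3.
  reduce_with pat_xy_PPP [:: x; y; p1; w1; p2; w2; p3; w3] x IH.
- do 3 right; left; exists p1, p2; split => //.
  + exact: HP (mem_head _ _).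
  + by apply: HP; rewrite !inE eqxx orbT.
- left; take_P HP p1 w1.
  reduce_with pat_xy_P [:: x; y; p1; w1] x IH.
- left; take_L HL l1; take_L HL l2.
  reduce_with pat_xy_LL [:: x; y; l1; l2] x IH.
- by do 2 right; left; exists l1; split => //; exact: HL (mem_head _ _).
- by right; left.
Qed.

Lemma reduce_root r cs : r \in U -> uniq cs -> neighbours e U r cs ->
  (forall z, z \in cs -> classified U r z) -> coverable e U.
Proof.
move=> r_U uniq_cs nbr_r cls.
have [//|[Ls [Ps [Xs [Ys [perm_c HL HP HX HY]]]]]] := sort_branches cls.
have uniq_c : uniq (Ls ++ Ps ++ Xs ++ Ys) by rewrite -(perm_uniq perm_c).
have {}nbr_r : neighbours e U r (Ls ++ Ps ++ Xs ++ Ys) by apply: neighbours_perm nbr_r.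
have [//|small] := reduce_children r_U uniq_c HL HP HX HY.
move: nbr_r uniq_c HL HP HX HY; case_small_children small => nbr_r uniq_c HL HP HX HY;
  cbn -[neighbours] in nbr_r.
- take_Y HY c b1 v1 u1 v2 u2.
  reduce_with pat_root_Y [:: r; c; b1; v1; u1; v2; u2] r IH.
- take_X HX a1 v1 u1 v2 u2; take_X HX a2 v3 u3 v4 u4.
  reduce_with pat_root_XX [:: r; a1; v1; u1; v2; u2; a2; v3; u3; v4; u4] r IH.
- take_L HL l; take_X HX a v1 u1 v2 u2.
  reduce_with pat_root_LX [:: r; l; a; v1; u1; v2; u2] r IH.
- take_X HX a v1 u1 v2 u2.
  reduce_with pat_root_X [:: r; a; v1; u1; v2; u2] r IH.
- take_P HP p1 w1; take_P HP p2 w2; take_P HP p3 w3.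
  reduce_with pat_root_PPP [:: r; p1; w1; p2; w2; p3; w3] r IH.
- take_P HP p1 w1; take_P HP p2 w2.
  reduce_with pat_root_PP [:: r; p1; w1; p2; w2] r IH.
- take_P HP p1 w1.
  reduce_with pat_root_P [:: r; p1; w1] r IH.
- take_L HL l1; take_L HL l2.
  reduce_with pat_root_LL [:: r; l1; l2] r IH.
- take_L HL l1.
  reduce_with pat_root_L [:: r; l1] r IH.
- reduce_with pat_root [:: r] r IH.
Qed.
End Children.
End Branches.

Section Induction.
Variables (V : finType) (e : rel V).
Hypotheses (e_sym : symmetric e) (e_irr : irreflexive e) (acyc : acyclic_graph e).

(* Induction on the number of vertices of V not yet on the walk ending in x, y. *)
Lemma classify_walk (U : {set V}) :
  (forall U' : {set V}, #|U'| < #|U| -> coverable e U') ->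
  forall n (w : seq V) (x y : V), #|V| <= n + size w -> nonbacktracking e (w ++ [:: x; y]) ->
  x \in U -> y \in U -> classified e U x y.
Proof.
move=> IH; elim=> [|n IHn] w x y le_V nb_w x_U y_U.
  have /card_uniqP := nonbacktracking_uniq e_irr acyc nb_w.
  rewrite size_cat /= => card_w.
  by move: (max_card (mem (w ++ [:: x; y]))); rewrite card_w; lia.
have exy : e x y by move/nonbacktracking_catr: nb_w => /= /andP[].
set cs := enum [set z in U | e y z & z != x].
apply: (classify_branch e_sym e_irr acyc IH (cs := cs) x_U y_U).
- by rewrite mem_enum inE eqxx !andbF.
- exact: enum_uniq.
- move=> z; rewrite inE mem_enum inE.
  by case: (eqVneq z x) => [->|_] /=; rewrite ?andbT // x_U e_sym exy.
- move=> z; rewrite mem_enum inE => /and3P[z_U eyz zNx].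
  apply: (IHn (w ++ [:: x])) => //; first by rewrite size_cat /= addn1 addnS -addSn.
  by rewrite -catA; apply: nonbacktracking_extend.
Qed.

Lemma coverable_all (U : {set V}) : coverable e U.
Proof.
have [n] := ubnP #|U|; elim: n U => // n IHn U lt_Un.
have IH (U' : {set V}) : #|U'| < #|U| -> coverable e U' by move=> ?; apply: IHn; lia.
have [->|[r r_U]] := set_0Vmem U.
  by exists [::], [::]; split => // x y; rewrite inE.
set cs := enum [set z in U | e r z].
apply: (reduce_root e_sym e_irr acyc IH (cs := cs) r_U (enum_uniq _)).
- by move=> z; rewrite mem_enum inE.
- move=> z; rewrite mem_enum inE => /andP[z_U erz].
  by apply: (classify_walk IH (n := #|V|) (w := [::])); rewrite ?addn0 //= erz.
Qed.
End Induction.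

Lemma seq_ind2 (T : Type) (P : seq T -> Prop) :
  P [::] -> (forall x, P [:: x]) -> (forall x y s, P s -> P [:: x, y & s]) ->
  forall s, P s.
Proof.
move=> P0 P1 P2 s; have [n] := ubnP (size s); elim: n s => // n IH [|x [|y s]] //= lt_sn.
by apply: P2; apply: IH; lia.
Qed.

Section PairUp.
Variables (V : finType) (e : rel V).
Hypotheses (e_sym : symmetric e) (e_irr : irreflexive e).

Fixpoint pair_up (L : seq (V * V)) : seq {set V} :=
  match L with
  | l1 :: l2 :: L' => [set x in [:: l1.1; l1.2; l2.1; l2.2]] :: pair_up L'
  | [:: l] => [:: [set x in [:: l.1; l.2]]]
  | [::] => [::]
  end.

Lemma size_pair_up L : 2 * size (pair_up L) <= size L + 1.
Proof. by elim/seq_ind2: L => //= l1 l2 L; lia. Qed.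

Lemma card_pair_up L S : S \in pair_up L -> #|S| <= 4.
Proof.
elim/seq_ind2: L => [|l|l1 l2 L IH] //=; rewrite inE.
  by move=> /eqP->; rewrite cardsE (leq_trans (card_size _)).
by case/orP=> [/eqP->|/IH //]; rewrite cardsE (leq_trans (card_size _)).
Qed.

Lemma pair_up_cover L l : l \in L -> exists2 S, S \in pair_up L & (l.1 \in S) && (l.2 \in S).
Proof.
elim/seq_ind2: L => [|l1|l1 l2 L IH] //=; rewrite !inE.
  by move=> /eqP->; exists [set x in [:: l1.1; l1.2]]; rewrite ?inE ?eqxx ?orbT.
case/orP=> [/eqP->|/orP[/eqP->|/IH[S S_L l_S]]].
- by exists [set x in [:: l1.1; l1.2; l2.1; l2.2]]; rewrite !inE ?eqxx ?orbT.
- by exists [set x in [:: l1.1; l1.2; l2.1; l2.2]]; rewrite !inE ?eqxx ?orbT.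
- by exists S; rewrite // inE S_L orbT.
Qed.

Lemma induced_far_pair (a b c d x y : V) : far_apart e (a, b) (c, d) ->
  induced_edge e [set z in [:: a; b; c; d]] x y -> pair_joins x y (a, b) || pair_joins x y (c, d).
Proof.
rewrite /far_apart /induced_edge /pair_joins /= !inE.
case/and5P=> _ _ _ _ /and4P[ac ad bc bd] /and3P[exy].
case/or4P=> /eqP ex; case/or4P=> /eqP ey; subst x y; rewrite ?eqxx ?orbT //;
  by move: exy; rewrite ?e_irr ?(e_sym c) ?(e_sym d)
       ?(negbTE ac) ?(negbTE ad) ?(negbTE bc) ?(negbTE bd).
Qed.

Lemma induced_pair (a b x y : V) :
  induced_edge e [set z in [:: a; b]] x y -> pair_joins x y (a, b).
Proof.
rewrite /induced_edge /pair_joins /= !inE => /and3P[exy].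
case/orP=> /eqP ex; case/orP=> /eqP ey; subst x y; rewrite ?eqxx ?orbT //;
  by move: exy; rewrite e_irr.
Qed.

Lemma pair_up_induced L S x y : pairwise (far_apart e) L -> S \in pair_up L ->
  induced_edge e S x y -> has (pair_joins x y) L.
Proof.
elim/seq_ind2: L => [|[a b]|[a b] [c d] L IH] //=.
  by rewrite inE => _ /eqP-> /induced_pair ->.
case/and3P=> /andP[far_ab _] _ far_L; rewrite inE => /orP[/eqP->|S_L] xy_S.
  by case/orP: (induced_far_pair far_ab xy_S) => ->; rewrite ?orbT.
by rewrite IH ?orbT.
Qed.

Lemma far_apart_joins l l' x y : far_apart e l l' -> pair_joins x y l -> pair_joins x y l' -> False.
Proof.
case: l l' => a b [c d]; rewrite /far_apart /pair_joins /= => /and5P[ac ad bc _ _].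
by case/orP=> /eqP[ax by_]; case/orP=> /eqP[cx dy]; subst; rewrite ?eqxx in ac ad bc.
Qed.

Lemma pair_up_disjoint L : pairwise (far_apart e) L -> pairwise (edge_disjoint e) (pair_up L).
Proof.
elim/seq_ind2: L => [|l|l1 l2 L IH] //=.
case/and3P=> /andP[far12 far1L] far2L farL; rewrite IH // andbT.
apply/allP => S S_L; apply/forallP => x; apply/forallP => y.
apply/negP => /andP[xy_12 xy_S]; have /hasP[l l_L jl] := pair_up_induced farL S_L xy_S.
case: l1 l2 far12 far1L far2L xy_12 => [a b] [c d] far12 far1L far2L xy_12.
case/orP: (induced_far_pair far12 xy_12) => jab.
- exact: far_apart_joins (allP far1L _ l_L) jab jl.
- exact: far_apart_joins (allP far2L _ l_L) jab jl.
Qed.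
End PairUp.

Section Family.
Variables (V : finType) (e : rel V).
Hypotheses (e_sym : symmetric e) (e_irr : irreflexive e).

Lemma merge_lonely U P L : partial_cover e U P L ->
  [/\ 8 * size (P ++ pair_up L) <= 3 * #|U| + 4,
      all (fun S : {set V} => #|S| <= 4) (P ++ pair_up L),
      pairwise (edge_disjoint e) (P ++ pair_up L)
    & forall x y, x \in U -> y \in U -> e x y ->
        has (fun S => induced_edge e S x y) (P ++ pair_up L)].
Proof.
case=> small_P disj_P _ far_L unc_L cov cost; split.
- by rewrite size_cat; have := size_pair_up L; lia.
- rewrite all_cat; apply/andP; split; last exact/allP/card_pair_up.
  by apply/allP => S /(allP small_P)/andP[].
- rewrite pairwise_cat disj_P (pair_up_disjoint e_sym e_irr far_L) !andbT.
  apply/allrelP => S S' S_P S'_L; apply/forallP => x; apply/forallP => y.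
  apply/negP => /andP[xy_S xy_S'].
  have /hasP[l l_L /orP[] /eqP l_xy] := pair_up_induced e_sym e_irr far_L S'_L xy_S'.
  + by move: (allP (allP unc_L _ l_L) _ S_P); rewrite l_xy /= xy_S.
  + move: (allP (allP unc_L _ l_L) _ S_P); rewrite l_xy /=.
    by move: xy_S; rewrite /induced_edge e_sym => /and3P[-> -> ->].
- move=> x y x_U y_U exy; rewrite has_cat.
  case/orP: (cov x y x_U y_U exy) => [-> //|/hasP[l l_L jl]].
  have [S S_L /andP[l1_S l2_S]] := pair_up_cover l_L.
  apply/orP; right; apply/hasP; exists S => //.
  by case/orP: jl => /eqP l_xy; move: l1_S l2_S; rewrite l_xy /induced_edge exy /= => -> ->.
Qed.

Lemma indexed_family k (Q : seq {set V}) : size Q <= k ->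
  all (fun S : {set V} => #|S| <= 4) Q -> pairwise (edge_disjoint e) Q ->
  (forall x y, e x y -> has (fun S => induced_edge e S x y) Q) ->
  exists S : 'I_k -> {set V},
    [/\ forall i, #|S i| <= 4, pairwise_edge_disjoint e S & covers_edges e S].
Proof.
move=> size_Q small_Q disj_Q cov_Q; exists (fun i => nth set0 Q i); split.
- move=> i; have [lt_iQ|le_Qi] := ltnP i (size Q); first exact: (allP small_Q) (mem_nth _ _).
  by rewrite nth_default // cards0.
- have disj_lt i j : i < j -> edge_disjoint e (nth set0 Q i) (nth set0 Q j).
    move=> lt_ij; have [lt_jQ|le_Qj] := ltnP j (size Q).
      exact: (pairwiseP set0 disj_Q i j (ltn_trans lt_ij lt_jQ) lt_jQ lt_ij).
    apply/forallP => x; apply/forallP => y.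
    by rewrite (nth_default _ le_Qj) /induced_edge inE !andbF.
  move=> i j iNj x y; case: (ltngtP i j) => [lt_ij|lt_ji|/val_inj eq_ij].
  + exact: (forallP (forallP (disj_lt _ _ lt_ij) x) y).
  + by rewrite andbC; exact: (forallP (forallP (disj_lt _ _ lt_ji) x) y).
  + by rewrite eq_ij eqxx in iNj.
- move=> x y /cov_Q/hasP[S S_Q xy_S].
  have lt_ik : index S Q < k by apply: leq_trans size_Q; rewrite index_mem.
  by exists (Ordinal lt_ik); rewrite /= nth_index.
Qed.
End Family.

Theorem mainTheorem10 (V : finType) (e : rel V) (n : nat) :
  is_tree e -> #|V| = n -> 1 <= n ->
  exists S : 'I_((3 * (n - 1) + 7) %/ 8) -> {set V},
    [/\ forall i, #|S i| <= 4,
        pairwise_edge_disjoint e S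
      & covers_edges e S].
Proof.
move=> [[e_sym e_irr] _ acyc] card_V n_gt0.
have [P [L cover]] := coverable_all e_sym e_irr acyc [set: V].
have [cost small disj cov] := merge_lonely e_sym e_irr cover.
apply: indexed_family small disj _.
- by rewrite cardsT card_V in cost; lia.
- by move=> x y; apply: cov; rewrite in_setT.
Qed.
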